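(* Consider the discrete-time LPV system $x_{k+1}=A(p_k)x_k+B(p_k)u_k$ with affine $A(p)=A_0+\sum_{i=1}^{n_p}p_iA_i$, $B(p)=B_0+\sum_{i=1}^{n_p}p_iB_i$, and a data set $\mathcal{D}$ from it such that $\mathcal{D}_p$ has full row rank $(1+n_p)(n_x+n_u)$. Suppose there exist $P\in\mathbb{S}^{n_x}$ with $P\succ0$, matrices $\mathcal{F}\in\mathbb{R}^{(N_d-1)\times n_x(1+n_p+n_p^2)}$ and $F_Q\in\mathbb{R}^{(N_d-1)(1+n_p)\times n_x(1+n_p)}$ related by $$\mathcal{F}\begin{bmatrix}I_{n_x}\\ p\otimes I_{n_x}\\ p\otimes p\otimes I_{n_x}\end{bmatrix}=\begin{bmatrix}I_{N_d-1}\\ p\otimes I_{N_d-1}\end{bmatrix}^\top F_Q\begin{bmatrix}I_{n_x}\\ p\otimes I_{n_x}\end{bmatrix}\quad\forall p\in\mathbb{P},$$ $Y_0\in\mathbb{R}^{n_u\times n_x}$, $\bar Y\in\mathbb{R}^{n_u\times n_xn_p}$ and $\Xi\in\mathbb{S}^{4n_pn_x}$ such that $$\begin{bmatrix}P&0&0\\0&I_{n_p}\otimes P&0\\ Y_0&\bar Y&0\\ 0& I_{n_p}\otimes Y_0& I_{n_p}\otimes\bar Y\end{bmatrix}=\mathcal{D}_p\mathcal{F},$$ and the full-block LMI conditions (defined in the context) hold with $\Delta(p)=\mathrm{diag}(p)\otimes I_{2n_x}$, $W=\begin{bmatrix}P_0&\mathcal{X}_+F_Q\\ (\mathcal{X}_+F_Q)^\top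 & P_0\end{bmatrix}$, $P_0=\mathrm{blkdiag}(P,0_{n_xn_p})$, $\mathcal{X}_+=\mathrm{blkdiag}(X_+,I_{n_p}\otimes X_+)$, $L_{11}=0_{2n_xn_p}$, $L_{12}=1_{n_p}\otimes I_{2n_x}$, $L_{21}=\begin{bmatrix}0_{n_x\times 2n_xn_p}\\ I_{n_p}\otimes[I_{n_x}\ 0]\\ 0_{n_x\times 2n_xn_p}\\ I_{n_p}\otimes[0\ I_{n_x}]\end{bmatrix}$, $L_{22}=\begin{bmatrix}[I_{n_x}\ 0]\\ 1_{n_p}\otimes 0_{n_x\times 2n_x}\\ [0\ I_{n_x}]\\ 1_{n_p}\otimes 0_{n_x\times 2n_x}\end{bmatrix}$. Then $K_0=Y_0P^{-1}$, $\bar K=\bar Y(I_{n_p}\otimes P)^{-1}$, with $\bar K=[K_1\ \cdots\ K_{n_p}]$, give an LPV state-feedback controller $K(p)=K_0+\sum_{i=1}^{n_p}p_iK_i$ that guarantees stability of the closed-loop interconnection $x_{k+1}=(A(p_k)+B(p_k)K(p_k))x_k$.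
   Context: Notation: $\otimes$ Kronecker product; $I_n$ identity; $0_{n\times m}$, $0_n$ zero matrices; $1_n\in\mathbb{R}^n$ the all-ones vector; $\mathbb{S}^n$ real symmetric $n\times n$ matrices; $\mathrm{blkdiag}$ block-diagonal concatenation; $\mathrm{diag}(p)$ diagonal matrix with the entries of $p$. The system has fully measured state $x_k\in\mathbb{R}^{n_x}$, input $u_k\in\mathbb{R}^{n_u}$, scheduling $p_k\in\mathbb{P}\subset\mathbb{R}^{n_p}$ with $\mathbb{P}$ compact and convex; $A_i,B_i$ unknown real matrices. $\mathcal{D}=\{u^d_k,p^d_k,x^d_k\}_{k=1}^{N_d}$ is a trajectory of the system; $U=[u^d_1\cdots u^d_{N_d-1}]$, $U^p=[p^d_1\otimes u^d_1\cdots p^d_{N_d-1}\otimes u^d_{N_d-1}]$, $X=[x^d_1\cdots x^d_{N_d-1}]$, $X^p=[p^d_1\otimes x^d_1\cdots p^d_{N_d-1}\otimes x^d_{N_d-1}]$, $X_+=[x^d_2\cdots x^d_{N_d}]$, $\mathcal{D}_p=[X^\top\ (X^p)^\top\ U^\top\ (U^p)^\top]^\top$. Stability of the closed loop means asymptotic stability for all scheduling trajectories with values in $\mathbb{P}$. Full-block LMI conditions for given $(\Delta(p),W,L_{11},L_{12},L_{21},L_{22})$ and symmetric multiplier $\Xi$: $\begin{bmatrix}L_{11}&L_{12}\\ I&0\end{bmatrix}^\top\Xi\begin{bmatrix}L_{11}&L_{12}\\ I&0\end{bmatrix}-\begin{bmatrix}L_{21}&L_{22}\end{bmatrix}^\top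 W\begin{bmatrix}L_{21}&L_{22}\end{bmatrix}\prec0$ and $\begin{bmatrix}I\\ \Delta(p)\end{bmatrix}^\top\Xi\begin{bmatrix}I\\ \Delta(p)\end{bmatrix}\succeq0$ for all $p\in\mathbb{P}$. *)

From HB Require Import structures.
From mathcomp Require Import all_boot all_order all_algebra.
From mathcomp Require Import all_classical all_reals all_analysis.
From mathcomp Require Import mxtens.
Set Implicit Arguments. Unset Strict Implicit. Unset Printing Implicit Defensive.
Import Order.TTheory GRing.Theory Num.Theory.
Import numFieldNormedType.Exports.
Local Open Scope ring_scope.
Local Open Scope classical_set_scope.

Section Defs.
Variable R : realType.

Definition kron_col m r c (p : 'cV[R]_m) (B : 'M[R]_(r, c)) : 'M[R]_(m * r, c) :=
  castmx (erefl (m * r), mul1n c) (p *t B).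

Definition kron_vec m n (p : 'cV[R]_m) (x : 'cV[R]_n) : 'cV[R]_(m * n) :=
  castmx (erefl (m * n), mul1n 1) (p *t x).

Definition diag_col m (p : 'cV[R]_m) : 'M[R]_m := diag_mx p^T.

Definition ones n : 'cV[R]_n := const_mx 1.

Definition sym_mx n (M : 'M[R]_n) : Prop := M^T = M.

Definition posdef n (M : 'M[R]_n) : Prop :=
  forall v : 'cV[R]_n, v != 0 -> 0 < (v^T *m M *m v) 0 0.
Definition negdef n (M : 'M[R]_n) : Prop :=
  forall v : 'cV[R]_n, v != 0 -> (v^T *m M *m v) 0 0 < 0.
Definition possemidef n (M : 'M[R]_n) : Prop :=
  forall v : 'cV[R]_n, 0 <= (v^T *m M *m v) 0 0.

Definition affine np r c (M0 : 'M[R]_(r, c)) (Mi : 'I_np -> 'M[R]_(r, c))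
  (p : 'cV[R]_np) : 'M[R]_(r, c) :=
  M0 + \sum_(i < np) p i 0 *: Mi i.

Definition blk_col r np n (M : 'M[R]_(r, np * n)) (i : 'I_np) : 'M[R]_(r, n) :=
  \matrix_(a, b) M a (mxtens_index (i, b)).

Fixpoint traj n np (Acl : 'cV[R]_np -> 'M[R]_n) (p : nat -> 'cV[R]_np)
  (x0 : 'cV[R]_n) (k : nat) : 'cV[R]_n :=
  match k with
  | O => x0
  | S k' => Acl (p k') *m traj Acl p x0 k'
  end.

Definition asympt_stable n np (Acl : 'cV[R]_np -> 'M[R]_n)
  (p : nat -> 'cV[R]_np) : Prop :=
  (forall eps : R, 0 < eps -> exists2 delta : R, 0 < delta &
     forall x0 : 'cV[R]_n, `|x0| < delta -> forall k, `|traj Acl p x0 k| < eps)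
  /\ (exists2 delta : R, 0 < delta &
     forall x0 : 'cV[R]_n, `|x0| < delta ->
       traj Acl p x0 @ \oo --> (0 : 'cV[R]_n)).

Definition lpv_stable n np (PP : set 'cV[R]_np) (Acl : 'cV[R]_np -> 'M[R]_n)
  : Prop :=
  forall p : nat -> 'cV[R]_np, (forall k, PP (p k)) -> asympt_stable Acl p.

End Defs.

From HB Require Import structures.
From mathcomp Require Import all_boot all_order all_algebra.
From mathcomp Require Import all_classical all_reals all_analysis.
From mathcomp Require Import mxtens.
From mathcomp Require Import ring lra.
Set Implicit Arguments. Unset Strict Implicit. Unset Printing Implicit Defensive.
Import Order.TTheory GRing.Theory Num.Theory.
Import numFieldNormedType.Exports.
Local Open Scope ring_scope.
Local Open Scope classical_set_scope.

(* With V x = x^T P^-1 x, choosing a = -P^-1 A_cl(p) x and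
   b = P^-1 x turns the quadratic form of [[P, A_cl(p) P], [(A_cl(p) P)^T, P]]
   at (a, b) into V x - V (A_cl(p) x); so if that matrix is positive definite,
   uniformly in p in PP, then V contracts by a fixed factor rho < 1 along every
   admissible scheduling trajectory, and the state decays exponentially.
   The uniform positivity is the full-block S-procedure: the LMI is strict, the
   multiplier term is nonnegative on the range of [I; Delta(p)], and M2 maps
   the lifted vector u = [Delta(p) L12 v; v], v = [a; b], to
   ([a; p (x) a], [b; p (x) b]), on which W evaluates exactly to the block
   form.  This last identity uses the data: D_p F = [...] identifies X F, X^p F,
   U F, U^p F, so X_+ F [b; p (x) b; p (x) p (x) b] = A_cl(p) P b, and the
   relation between F and F_Q transfers this to X_+ F_Q. *)

Section Kronecker.
Variable R : realType.

Lemma kron_vecE m n (q : 'cV[R]_m) (y : 'cV[R]_n) i j :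
  kron_vec q y (mxtens_index (i, j)) 0 = q i 0 * y j 0.
Proof.
rewrite /kron_vec castmxE /=.
have -> : cast_ord (esym (mul1n 1)) 0 = mxtens_index (0 : 'I_1, 0 : 'I_1).
  exact: val_inj.
by rewrite cast_ord_id tensmxE.
Qed.

Lemma kron_colE m r c (q : 'cV[R]_m) (B : 'M[R]_(r, c)) i j k :
  kron_col q B (mxtens_index (i, j)) k = q i 0 * B j k.
Proof.
rewrite /kron_col castmxE /=.
have -> : cast_ord (esym (mul1n c)) k = mxtens_index (0 : 'I_1, k).
  exact: val_inj.
by rewrite cast_ord_id tensmxE.
Qed.

Lemma big_mxtens m n (F : 'I_(m * n) -> R) :
  \sum_(k < m * n) F k = \sum_(i < m) \sum_(j < n) F (mxtens_index (i, j)).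
Proof.
rewrite pair_big /=; apply: reindex.
exists (@mxtens_unindex m n) => k _; first by case: k => i j; rewrite mxtens_indexK.
by rewrite -surjective_pairing mxtens_unindexK.
Qed.

Lemma tensmx_kron_vec m n r s (A : 'M[R]_(m, n)) (C : 'M[R]_(r, s))
    (q : 'cV[R]_n) (y : 'cV[R]_s) :
  (A *t C) *m kron_vec q y = kron_vec (A *m q) (C *m y).
Proof.
apply/colP => k; case: (mxtens_indexP k) => i j.
rewrite kron_vecE !mxE big_mxtens mulr_suml; apply: eq_bigr => a _.
rewrite mulr_sumr; apply: eq_bigr => b _.
by rewrite kron_vecE tensmxE mulrACA.
Qed.

Lemma kron_col_mulmx m r c (q : 'cV[R]_m) (B : 'M[R]_(r, c)) (x : 'cV[R]_c) :
  kron_col q B *m x = kron_vec q (B *m x).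
Proof.
apply/colP => k; case: (mxtens_indexP k) => i j.
rewrite kron_vecE !mxE mulr_sumr; apply: eq_bigr => a _.
by rewrite kron_colE mulrA.
Qed.

Lemma kron_vecDr m n (q : 'cV[R]_m) (y z : 'cV[R]_n) :
  kron_vec q (y + z) = kron_vec q y + kron_vec q z.
Proof.
apply/colP => k; case: (mxtens_indexP k) => i j.
by rewrite mxE !kron_vecE mxE mulrDr.
Qed.

Lemma kron_vec0r m n (q : 'cV[R]_m) : kron_vec q (0 : 'cV[R]_n) = 0.
Proof.
apply/colP => k; case: (mxtens_indexP k) => i j.
by rewrite kron_vecE !mxE mulr0.
Qed.

Lemma col_mx_kron_vec m n (q : 'cV[R]_m) (x : 'cV[R]_n) :
  col_mx x (kron_vec q x) = col_mx 1%:M (kron_col q 1%:M) *m x.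
Proof. by rewrite mul_col_mx mul1mx kron_col_mulmx mul1mx. Qed.

Lemma tensmx11 m n : (1%:M : 'M[R]_m) *t (1%:M : 'M[R]_n) = 1%:M.
Proof.
apply/matrixP => a b.
case: (mxtens_indexP a) => i j; case: (mxtens_indexP b) => k l.
rewrite tensmxE !mxE (inj_eq (can_inj (@mxtens_indexK m n))) xpair_eqE.
by case: (i == k); case: (j == l); rewrite ?mulr1 ?mulr0.
Qed.

Lemma unitmx_tens1 m n (P : 'M[R]_n) :
  P \in unitmx -> (1%:M : 'M[R]_m) *t P \in unitmx.
Proof.
move=> uP; have : (1%:M *t invmx P) *m ((1%:M : 'M[R]_m) *t P) = 1%:M.
  by rewrite tensmx_mul mul1mx mulVmx // tensmx11.
by case/mulmx1_unit.
Qed.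

Lemma diag_col_ones m (p : 'cV[R]_m) : diag_col p *m ones R m = p.
Proof.
apply/colP => i; rewrite !mxE (bigD1 i) //= big1 ?addr0.
  by rewrite !mxE eqxx mulr1n mulr1.
by move=> j /negbTE ji; rewrite !mxE eq_sym ji mulr0n mul0r.
Qed.

Lemma diag_col_kron_ones m n (p : 'cV[R]_m) (x : 'cV[R]_n) :
  (diag_col p *t 1%:M) *m kron_vec (ones R m) x = kron_vec p x.
Proof. by rewrite tensmx_kron_vec diag_col_ones mul1mx. Qed.

Definition blk_row np r c (Mi : 'I_np -> 'M[R]_(r, c)) : 'M[R]_(r, np * c) :=
  \matrix_(a, k) Mi (mxtens_unindex k).1 a (mxtens_unindex k).2.

Lemma blk_row_col r np n (M : 'M[R]_(r, np * n)) : blk_row (blk_col M) = M.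
Proof. by apply/matrixP => a k; rewrite !mxE -surjective_pairing mxtens_unindexK. Qed.

Lemma mulmx_kron_vec r np n (M : 'M[R]_(r, np * n)) (q : 'cV[R]_np)
    (x : 'cV[R]_n) :
  M *m kron_vec q x = \sum_(i < np) q i 0 *: (blk_col M i *m x).
Proof.
apply/colP => a; rewrite !mxE big_mxtens summxE; apply: eq_bigr => i _.
rewrite !mxE mulr_sumr; apply: eq_bigr => j _.
by rewrite kron_vecE !mxE mulrCA.
Qed.

Lemma affine_mulmx np r c (M0 : 'M[R]_(r, c)) (Mi : 'I_np -> 'M[R]_(r, c))
    (p : 'cV[R]_np) (x : 'cV[R]_c) :
  affine M0 Mi p *m x = M0 *m x + blk_row Mi *m kron_vec p x.
Proof.
rewrite /affine mulmxDl mulmx_suml mulmx_kron_vec; congr (_ + _).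
apply: eq_bigr => i _; rewrite -scalemxAl; congr (_ *: (_ *m _)).
by apply/matrixP => a b; rewrite !mxE mxtens_indexK.
Qed.

End Kronecker.

Section DataMatrices.
Variable R : realType.

Definition data_mx n N (d : nat -> 'cV[R]_n) : 'M[R]_(n, N) :=
  \matrix_(i, j) d j i 0.

Lemma data_mx_delta n N (d : nat -> 'cV[R]_n) (j : 'I_N) :
  data_mx N d *m delta_mx j (0 : 'I_1) = d j.
Proof. by rewrite -colE; apply/colP => i; rewrite !mxE. Qed.

Lemma eq_mx_cols m n (A B : 'M[R]_(m, n)) :
  (forall j, A *m delta_mx j (0 : 'I_1) = B *m delta_mx j (0 : 'I_1)) -> A = B.
Proof.
by move=> AB; apply/matrixP => i j; move/colP: (AB j) => /(_ i); rewrite -!colE !mxE.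
Qed.

End DataMatrices.

Section QuadraticForms.
Variable R : realType.

Definition mxform m n (x : 'cV[R]_m) (M : 'M[R]_(m, n)) (y : 'cV[R]_n) : R :=
  (x^T *m M *m y) 0 0.

Lemma mxform_tr m n (x : 'cV[R]_n) (M : 'M[R]_(m, n)) (y : 'cV[R]_m) :
  mxform x M^T y = mxform y M x.
Proof.
rewrite /mxform; have -> : (x^T *m M^T *m y) 0 0 = (x^T *m M^T *m y)^T 0 0.
  by rewrite [RHS]mxE.
by rewrite !trmx_mul !trmxK mulmxA.
Qed.

Lemma mxformC n (M : 'M[R]_n) x y : sym_mx M -> mxform x M y = mxform y M x.
Proof. by move=> symM; rewrite -mxform_tr symM. Qed.

Lemma mxform_mulmxl m n k (x : 'cV[R]_k) (A : 'M[R]_(k, m)) (M : 'M[R]_(m, n)) y :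
  mxform x (A *m M) y = mxform (A^T *m x) M y.
Proof. by rewrite /mxform trmx_mul trmxK !mulmxA. Qed.

Lemma mxform_mulmxr m n k x (M : 'M[R]_(m, n)) (B : 'M[R]_(n, k)) y :
  mxform x (M *m B) y = mxform x M (B *m y).
Proof. by rewrite /mxform !mulmxA. Qed.

Lemma mxform_conj m n k l (x : 'cV[R]_k) (A : 'M[R]_(m, k)) (M : 'M[R]_(m, n))
    (B : 'M[R]_(n, l)) y :
  mxform x (A^T *m M *m B) y = mxform (A *m x) M (B *m y).
Proof. by rewrite mxform_mulmxr mxform_mulmxl trmxK. Qed.

Lemma mxformB m n x (A B : 'M[R]_(m, n)) y :
  mxform x (A - B) y = mxform x A y - mxform x B y.
Proof. by rewrite /mxform mulmxBr mulmxBl !mxE. Qed.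

Lemma mxformN m n x (M : 'M[R]_(m, n)) y : mxform x (- M) y = - mxform x M y.
Proof. by rewrite /mxform mulmxN mulNmx !mxE. Qed.

Lemma mxform0 m n (x : 'cV[R]_m) (y : 'cV[R]_n) : mxform x 0 y = 0.
Proof. by rewrite /mxform mulmx0 mul0mx mxE. Qed.

Lemma mxformNl m n (x : 'cV[R]_m) (M : 'M[R]_(m, n)) y :
  mxform (- x) M y = - mxform x M y.
Proof. by rewrite /mxform linearN /= !mulNmx mxE. Qed.

Lemma mxformNr m n x (M : 'M[R]_(m, n)) (y : 'cV[R]_n) :
  mxform x M (- y) = - mxform x M y.
Proof. by rewrite /mxform mulmxN mxE. Qed.

Lemma mxform_block m1 m2 n1 n2 (x1 : 'cV[R]_m1) (x2 : 'cV[R]_m2)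
    (y1 : 'cV[R]_n1) (y2 : 'cV[R]_n2) A B C D :
  mxform (col_mx x1 x2) (block_mx A B C D) (col_mx y1 y2) =
  mxform x1 A y1 + mxform x1 B y2 + mxform x2 C y1 + mxform x2 D y2.
Proof.
rewrite /mxform tr_col_mx mul_row_block mul_row_col !mulmxDl !mxE.
ring.
Qed.

Lemma mxform_addZ n (M : 'M[R]_n) (u v : 'cV[R]_n) (t : R) :
  sym_mx M ->
  mxform (v + t *: u) M (v + t *: u) =
  mxform v M v + 2 * t * mxform u M v + t ^+ 2 * mxform u M u.
Proof.
move=> symM; have vMu : mxform v M u = mxform u M v by exact: mxformC.
rewrite /mxform in vMu *; rewrite !linearD !linearZ /= !mulmxDl -!scalemxAl.
rewrite !mxE in vMu *; rewrite vMu; ring.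
Qed.

End QuadraticForms.

Section PositiveDefinite.
Variable R : realType.

Lemma posdef_ge0 n (M : 'M[R]_n) : posdef M -> possemidef M.
Proof.
move=> pdM v; case: (eqVneq v 0) => [->|v0]; last exact/ltW/pdM.
by rewrite mulmx0 mxE.
Qed.

Lemma posdef_unitmx n (M : 'M[R]_n) : posdef M -> M \in unitmx.
Proof.
move=> pdM; rewrite unitmxE unitfE; apply/negP => /det0P [v v0 vM].
by have := pdM v^T; rewrite trmx_eq0 trmxK vM mul0mx mxE ltxx => /(_ v0).
Qed.

Lemma posdef_CauchySchwarz n (M : 'M[R]_n) (u v : 'cV[R]_n) :
  sym_mx M -> posdef M -> mxform u M v ^+ 2 <= mxform u M u * mxform v M v.
Proof.
move=> symM pdM; case: (eqVneq u 0) => [->|u0].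
  by rewrite /mxform linear0 !mul0mx mxE expr0n mul0r.
have C0 : 0 < mxform u M u := pdM u u0.
set C := mxform u M u in C0 *; set B := mxform u M v.
pose t := - B / C.
have h : 0 <= mxform (v + t *: u) M (v + t *: u) := posdef_ge0 pdM _.
have := mulr_ge0 (ltW C0) h; rewrite mxform_addZ // -/C -/B.
have -> : C * (mxform v M v + 2 * t * B + t ^+ 2 * C) = C * mxform v M v - B ^+ 2.
  by rewrite /t; field; rewrite gt_eqF.
by rewrite subr_ge0.
Qed.

Lemma mx_norm_entry m n (v : 'M[R]_(m, n)) i j : `|v i j| <= `|v|.
Proof.
rewrite [leRHS]/Num.Def.normr /= mx_normrE.
by apply/bigmax_geP; right => /=; exists (i, j).
Qed.

Lemma mx_norm_col_mxr m n k (a : 'M[R]_(m, k)) (b : 'M[R]_(n, k)) :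
  `|b| <= `|col_mx a b|.
Proof.
rewrite [leLHS]/Num.Def.normr /= mx_normrE.
apply: bigmax_le => [|[i j] _] /=; first exact: normr_ge0.
by rewrite -(col_mxEd a); apply: mx_norm_entry.
Qed.

Lemma mx_norm_sqr_le m n (v : 'M[R]_(m, n)) K :
  0 <= K -> (forall i j, v i j ^+ 2 <= K) -> `|v| ^+ 2 <= K.
Proof.
move=> K0 vK; rewrite -(sqr_sqrtr K0) ler_pXn2r ?nnegrE ?sqrtr_ge0 //.
rewrite [leLHS]/Num.Def.normr /= mx_normrE.
apply: bigmax_le => [|[i j] _] /=; first exact: sqrtr_ge0.
by rewrite -sqrtr_sqr ler_wsqrtr.
Qed.

Lemma posdef_coercive n (M : 'M[R]_n) :
  sym_mx M -> posdef M ->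
  exists2 c, 0 < c & forall v, `|v| ^+ 2 <= c * mxform v M v.
Proof.
move=> symM pdM; have uM := posdef_unitmx pdM.
pose e i : 'cV[R]_n := (invmx M)^T *m delta_mx i 0.
(* [e] is the basis dual to the canonical one with respect to [M] *)
have eE i v : mxform (e i) M v = v i 0.
  rewrite /mxform trmx_mul trmxK -!mulmxA (mulmxA (invmx M)) mulVmx // mul1mx.
  by rewrite trmx_delta -rowE mxE.
have e_ge0 i : 0 <= mxform (e i) M (e i) := posdef_ge0 pdM _.
pose c := 1 + \sum_i mxform (e i) M (e i).
have c_ge1 : 1 <= c by rewrite lerDl sumr_ge0.
exists c => [|v]; first exact: lt_le_trans c_ge1.
have v_ge0 : 0 <= mxform v M v := posdef_ge0 pdM _.
apply: mx_norm_sqr_le => [|i j]; first by rewrite mulr_ge0 // (le_trans ler01).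
rewrite [j]ord1 -eE; apply: le_trans (posdef_CauchySchwarz _ _ symM pdM) _.
apply: ler_wpM2r => //; rewrite /c (bigD1 i) //= addrCA lerDl addr_ge0 // sumr_ge0 //.
Qed.

Lemma mxform_le_norm n (M : 'M[R]_n) :
  exists2 c, 0 <= c & forall v, mxform v M v <= c * `|v| ^+ 2.
Proof.
exists (\sum_i \sum_j `|M i j|) => [|v]; first by do 2 apply: sumr_ge0 => ? _.
have -> : mxform v M v = \sum_i \sum_j v i 0 * M i j * v j 0.
  rewrite /mxform mxE; under eq_bigr => j _ do rewrite mxE mulr_suml.
  rewrite exchange_big; apply: eq_bigr => i _; apply: eq_bigr => j _.
  by rewrite mxE.
rewrite mulr_suml; apply: ler_sum => i _; rewrite mulr_suml; apply: ler_sum => j _.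
apply: le_trans (ler_norm _) _; rewrite !normrM mulrAC [leRHS]mulrC.
apply: ler_wpM2r => //; rewrite expr2; apply: ler_pM => //; exact: mx_norm_entry.
Qed.

Lemma sym_invmx n (P : 'M[R]_n) : sym_mx P -> sym_mx (invmx P).
Proof. by rewrite /sym_mx trmx_inv => ->. Qed.

Lemma mxform_invmx_conj n (P M : 'M[R]_n) (y z : 'cV[R]_n) :
  sym_mx P -> P \in unitmx ->
  mxform (invmx P *m y) (M *m P) (invmx P *m z) = mxform y (invmx P *m M) z.
Proof.
move=> symP uP; rewrite mxform_mulmxr mulKVmx // mxform_mulmxl.
by rewrite (sym_invmx symP).
Qed.

Lemma mxform_invmx n (P : 'M[R]_n) (y z : 'cV[R]_n) :
  sym_mx P -> P \in unitmx ->
  mxform (invmx P *m y) P (invmx P *m z) = mxform y (invmx P) z.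
Proof.
by move=> symP uP; have := mxform_invmx_conj 1%:M y z symP uP; rewrite mul1mx mulmx1.
Qed.

Lemma posdef_invmx n (P : 'M[R]_n) : sym_mx P -> posdef P -> posdef (invmx P).
Proof.
move=> symP pdP v v0; have uP := posdef_unitmx pdP.
have Pv0 : invmx P *m v != 0.
  by apply: contraNneq v0 => Pv0; rewrite -(mulKVmx uP v) Pv0 mulmx0.
change (0 < mxform v (invmx P) v).
by rewrite -mxform_invmx //; apply: pdP.
Qed.

End PositiveDefinite.

Section Stability.
Variable R : realType.

Lemma asympt_stable_of_exp_bound n np (A : 'cV[R]_np -> 'M[R]_n)
    (p : nat -> 'cV[R]_np) (C rho : R) :
  0 <= C -> 0 <= rho < 1 ->
  (forall x0 k, `|traj A p x0 k| ^+ 2 <= C * rho ^+ k * `|x0| ^+ 2) ->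
  asympt_stable A p.
Proof.
move=> C0 /andP[rho0 rho1] bound.
have norm_lt (x : 'cV[R]_n) e : 0 < e -> `|x| ^+ 2 < e ^+ 2 -> `|x| < e.
  by move=> e0; rewrite ltr_pXn2r ?nnegrE ?normr_ge0 ?ltW.
split=> [e e0|].
  have C1 : 0 < 1 + C by lra.
  pose d := e / (1 + C); have d0 : 0 < d by rewrite divr_gt0.
  have de : e = d * (1 + C) by rewrite divfK // gt_eqF.
  exists d => // x0 x0d k; apply: norm_lt => //; apply: le_lt_trans (bound x0 k) _.
  have rk : rho ^+ k <= 1 by rewrite exprn_ile1 // ltW.
  have x0d2 : `|x0| ^+ 2 <= d ^+ 2.
    by rewrite ler_pXn2r ?nnegrE ?normr_ge0 ?(ltW d0) ?(ltW x0d).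
  have : C * rho ^+ k * `|x0| ^+ 2 <= C * d ^+ 2.
    rewrite -mulrA; apply: ler_wpM2l => //; rewrite -[leRHS]mul1r.
    by apply: ler_pM; rewrite ?exprn_ge0.
  move/le_lt_trans; apply; rewrite de; nra.
exists 1 => // x0 _; apply/cvgr0Pnorm_lt => e e0.
set a := C * `|x0| ^+ 2; have a0 : 0 <= a by rewrite mulr_ge0.
have a1 : 0 < 1 + a by lra.
have t0 : 0 < e ^+ 2 / (1 + a) by rewrite divr_gt0 ?exprn_gt0.
have /cvgr0Pnorm_lt /(_ _ t0) : (rho ^+ k) @[k --> \oo] --> 0.
  by apply: cvg_expr; rewrite ger0_norm.
apply: filterS => k; rewrite ger0_norm ?exprn_ge0 // => rk.
apply: norm_lt => //; apply: le_lt_trans (bound x0 k) _.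
rewrite mulrAC -/a; apply: le_lt_trans (ler_wpM2l a0 (ltW rk)) _.
by rewrite mulrA ltr_pdivrMr // mulrDr mulr1 mulrC ltrDr exprn_gt0.
Qed.

Lemma lpv_stable_of_lyapunov n np (PP : set 'cV[R]_np) (A : 'cV[R]_np -> 'M[R]_n)
    (Q : 'M[R]_n) (rho : R) :
  sym_mx Q -> posdef Q -> 0 <= rho < 1 ->
  (forall p, PP p -> forall x,
     mxform (A p *m x) Q (A p *m x) <= rho * mxform x Q x) ->
  lpv_stable PP A.
Proof.
move=> symQ pdQ rho01 decrease p PPp; have rho0 : 0 <= rho by case/andP: rho01.
have [cl cl0 lower] := posdef_coercive symQ pdQ.
have [cu cu0 upper] := mxform_le_norm Q.
have geometric x0 k :
    mxform (traj A p x0 k) Q (traj A p x0 k) <= rho ^+ k * mxform x0 Q x0.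
  elim: k => [|k IHk]; first by rewrite expr0 mul1r.
  apply: le_trans (decrease _ (PPp k) _) _.
  by rewrite exprS -mulrA; apply: ler_wpM2l.
apply: (asympt_stable_of_exp_bound (C := cl * cu) _ rho01) => [|x0 k].
  by rewrite mulr_ge0 // ltW.
apply: le_trans (lower _) _; rewrite -!mulrA ler_pM2l //.
apply: le_trans (geometric x0 k) _; rewrite mulrCA.
by apply: ler_wpM2l; [exact: exprn_ge0 | exact: upper].
Qed.

End Stability.

Section LyapunovLMI.
Variable R : realType.

Definition lyap_mx n (P A : 'M[R]_n) : 'M[R]_(n + n) :=
  block_mx P (A *m P) (A *m P)^T P.

Lemma mxform_lyap_mx n (P A : 'M[R]_n) (x : 'cV[R]_n) :
  sym_mx P -> P \in unitmx ->
  mxform (col_mx (- (invmx P *m (A *m x))) (invmx P *m x)) (lyap_mx P A)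
         (col_mx (- (invmx P *m (A *m x))) (invmx P *m x))
  = mxform x (invmx P) x - mxform (A *m x) (invmx P) (A *m x).
Proof.
move=> symP uP; rewrite mxform_block mxform_tr !mxformNl mxformNr opprK.
rewrite !mxform_invmx // mxform_invmx_conj // mxform_mulmxr; ring.
Qed.

Lemma lyap_mx_contraction n (P A : 'M[R]_n) (kap : R) :
  sym_mx P -> P \in unitmx -> 1 <= kap ->
  (forall a b, mxform b P b <= kap * mxform (col_mx a b) (lyap_mx P A) (col_mx a b)) ->
  forall x, mxform (A *m x) (invmx P) (A *m x) <= (1 - kap^-1) * mxform x (invmx P) x.
Proof.
move=> symP uP kap1 hkap x; have kap0 : 0 < kap by apply: lt_le_trans kap1.
have := hkap (- (invmx P *m (A *m x))) (invmx P *m x).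
rewrite mxform_lyap_mx // mxform_invmx // mulrBr => h.
rewrite -(ler_pM2l kap0) mulrA mulrBr mulr1 mulfV ?gt_eqF // mulrBl mul1r; lra.
Qed.

Lemma full_block_S_procedure q r k l (Xi : 'M[R]_(q + r)) (W : 'M[R]_l)
    (M1 : 'M[R]_(q + r, k)) (M2 : 'M[R]_(l, k)) :
  sym_mx Xi -> sym_mx W -> negdef (M1^T *m Xi *m M1 - M2^T *m W *m M2) ->
  exists2 c, 0 < c & forall (Delta : 'M[R]_(r, q)) z u,
    possemidef ((col_mx 1%:M Delta)^T *m Xi *m col_mx 1%:M Delta) ->
    M1 *m u = col_mx 1%:M Delta *m z ->
    `|u| ^+ 2 <= c * mxform (M2 *m u) W (M2 *m u).
Proof.
move=> symXi symW lmi.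
pose G := - (M1^T *m Xi *m M1 - M2^T *m W *m M2).
have symG : sym_mx G.
  by rewrite /sym_mx linearN linearB /= !trmx_mul !trmxK symXi symW !mulmxA.
have pdG : posdef G.
  by move=> v /lmi ?; change (0 < mxform v G v); rewrite mxformN oppr_gt0.
have [c c0 coercive] := posdef_coercive symG pdG.
exists c => // Delta z u multiplier M1u.
apply: le_trans (coercive u) _; rewrite ler_pM2l //.
rewrite mxformN mxformB opprB !mxform_conj M1u gerBl -mxform_conj.
exact: multiplier.
Qed.

End LyapunovLMI.

Section DataDrivenDesign.
Variables (R : realType) (nx nu np N : nat) (PP : set 'cV[R]_np).
Variables (A0 : 'M[R]_nx) (Ai : 'I_np -> 'M[R]_nx).
Variables (B0 : 'M[R]_(nx, nu)) (Bi : 'I_np -> 'M[R]_(nx, nu)).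
Variables (xd : nat -> 'cV[R]_nx) (ud : nat -> 'cV[R]_nu) (pd : nat -> 'cV[R]_np).
Variables (P : 'M[R]_nx) (FF : 'M[R]_(N, nx + np * nx + np * (np * nx))).
Variable FQ : 'M[R]_(N + np * N, nx + np * nx).
Variables (Y0 : 'M[R]_(nu, nx)) (Ybar : 'M[R]_(nu, np * nx)).
Variable Xi : 'M[R]_(np * (nx + nx) + np * (nx + nx)).

Let U : 'M[R]_(nu, N) := data_mx N ud.
Let Up : 'M[R]_(np * nu, N) := data_mx N (fun k => kron_vec (pd k) (ud k)).
Let X : 'M[R]_(nx, N) := data_mx N xd.
Let Xp : 'M[R]_(np * nx, N) := data_mx N (fun k => kron_vec (pd k) (xd k)).
Let Xplus : 'M[R]_(nx, N) := data_mx N (fun k => xd k.+1).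
Let Dp := col_mx (col_mx X Xp) (col_mx U Up).
Let P0 : 'M[R]_(nx + np * nx) := block_mx P 0 0 0.
Let XXplus : 'M[R]_(nx + np * nx, N + np * N) :=
  block_mx Xplus 0 0 ((1%:M : 'M[R]_np) *t Xplus).
Let W := block_mx P0 (XXplus *m FQ) (XXplus *m FQ)^T P0.
Let Delta (p : 'cV[R]_np) : 'M[R]_(np * (nx + nx)) :=
  diag_col p *t (1%:M : 'M[R]_(nx + nx)).
Let L12 : 'M[R]_(np * (nx + nx), nx + nx) := kron_col (ones R np) 1%:M.
Let IxO : 'M[R]_(nx, nx + nx) := row_mx 1%:M 0.
Let OxI : 'M[R]_(nx, nx + nx) := row_mx 0 1%:M.
Let L21 : 'M[R]_((nx + np * nx) + (nx + np * nx), np * (nx + nx)) :=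
  col_mx (col_mx 0 ((1%:M : 'M[R]_np) *t IxO))
         (col_mx 0 ((1%:M : 'M[R]_np) *t OxI)).
Let L22 : 'M[R]_((nx + np * nx) + (nx + np * nx), nx + nx) :=
  col_mx (col_mx IxO (kron_col (ones R np) (0 : 'M[R]_(nx, nx + nx))))
         (col_mx OxI (kron_col (ones R np) (0 : 'M[R]_(nx, nx + nx)))).
Let M1 := col_mx (row_mx (0 : 'M[R]_(np * (nx + nx))) L12) (row_mx 1%:M 0).
Let M2 := row_mx L21 L22.
Let K0 := Y0 *m invmx P.
Let Kbar := Ybar *m invmx ((1%:M : 'M[R]_np) *t P).
Let K (p : 'cV[R]_np) : 'M[R]_(nu, nx) := affine K0 (blk_col Kbar) p.
Let Acl (p : 'cV[R]_np) := affine A0 Ai p + affine B0 Bi p *m K p.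

Hypothesis state_eq : forall k, (k < N)%N ->
  xd k.+1 = affine A0 Ai (pd k) *m xd k + affine B0 Bi (pd k) *m ud k.
Hypothesis symP : sym_mx P.
Hypothesis pdP : posdef P.
Hypothesis FF_FQ : forall p, PP p ->
  FF *m col_mx (col_mx 1%:M (kron_col p 1%:M))
               (kron_col p (kron_col p (1%:M : 'M[R]_nx)))
  = (col_mx 1%:M (kron_col p (1%:M : 'M[R]_N)))^T *m FQ
      *m col_mx 1%:M (kron_col p 1%:M).
Hypothesis FF_data :
  col_mx (col_mx
     (row_mx (row_mx P 0) 0)
     (row_mx (row_mx 0 ((1%:M : 'M[R]_np) *t P)) 0))
   (col_mx
     (row_mx (row_mx Y0 Ybar) 0)
     (row_mx (row_mx 0 ((1%:M : 'M[R]_np) *t Y0))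
             ((1%:M : 'M[R]_np) *t Ybar)))
   = Dp *m FF.
Hypothesis symXi : sym_mx Xi.
Hypothesis lmi : negdef (M1^T *m Xi *m M1 - M2^T *m W *m M2).
Hypothesis multiplier : forall p, PP p ->
  possemidef ((col_mx 1%:M (Delta p))^T *m Xi *m col_mx 1%:M (Delta p)).

Lemma Xplus_decomp :
  Xplus = A0 *m X + blk_row Ai *m Xp + (B0 *m U + blk_row Bi *m Up).
Proof.
apply: eq_mx_cols => j; rewrite !mulmxDl -!mulmxA !data_mx_delta /=.
by rewrite state_eq // !affine_mulmx.
Qed.

Lemma K_mulmx p b : K p *m (P *m b) = Y0 *m b + Ybar *m kron_vec p b.
Proof.
have uP := posdef_unitmx pdP.
rewrite /K affine_mulmx blk_row_col /K0 /Kbar.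
have -> : kron_vec p (P *m b) = ((1%:M : 'M[R]_np) *t P) *m kron_vec p b.
  by rewrite tensmx_kron_vec mul1mx.
rewrite -!mulmxA !mulKmx //.
exact: unitmx_tens1.
Qed.

Lemma Xplus_FF_lift p b :
  Xplus *m (FF *m col_mx (col_mx b (kron_vec p b)) (kron_vec p (kron_vec p b)))
  = Acl p *m (P *m b).
Proof.
move: FF_data; rewrite /Dp !mul_col_mx.
case/eq_col_mx => /eq_col_mx [XF XpF] /eq_col_mx [UF UpF].
rewrite /Acl (mulmxDl (affine A0 Ai p)) -mulmxA K_mulmx !affine_mulmx.
rewrite Xplus_decomp !mulmxDl -!mulmxA !(mulmxA X) !(mulmxA Xp) !(mulmxA U).
rewrite !(mulmxA Up) -XF -XpF -UF -UpF !mul_row_col !mul0mx !addr0 !add0r.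
by rewrite !tensmx_kron_vec !mul1mx -kron_vecDr.
Qed.

Lemma XXplus_FQ_form p a b : PP p ->
  mxform (col_mx a (kron_vec p a)) (XXplus *m FQ) (col_mx b (kron_vec p b))
  = mxform a (Acl p *m P) b.
Proof.
move=> PPp.
have XXplusT : XXplus^T *m col_mx a (kron_vec p a) =
               col_mx (Xplus^T *m a) (kron_vec p (Xplus^T *m a)).
  rewrite /XXplus tr_block_mx !trmx0 trmx_tens trmx1 mul_block_col.
  by rewrite !mul0mx addr0 add0r tensmx_kron_vec mul1mx.
have lift3 : col_mx (col_mx 1%:M (kron_col p 1%:M))
                    (kron_col p (kron_col p (1%:M : 'M[R]_nx))) *m b
             = col_mx (col_mx b (kron_vec p b)) (kron_vec p (kron_vec p b)).
  by rewrite !mul_col_mx mul1mx !kron_col_mulmx mul1mx.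
rewrite mxform_mulmxl XXplusT !col_mx_kron_vec -mxform_conj -FF_FQ //.
rewrite -mxform_mulmxl !mxform_mulmxr -mulmxA lift3.
by rewrite /mxform -!mulmxA Xplus_FF_lift.
Qed.

Lemma W_form p a b : PP p ->
  mxform (col_mx (col_mx a (kron_vec p a)) (col_mx b (kron_vec p b))) W
         (col_mx (col_mx a (kron_vec p a)) (col_mx b (kron_vec p b)))
  = mxform (col_mx a b) (lyap_mx P (Acl p)) (col_mx a b).
Proof.
move=> PPp; rewrite /W /lyap_mx /P0 !mxform_block !mxform0 !addr0.
by rewrite !mxform_tr XXplus_FQ_form.
Qed.

Lemma M2_lift p a b :
  M2 *m col_mx (Delta p *m (L12 *m col_mx a b)) (col_mx a b) =
  col_mx (col_mx a (kron_vec p a)) (col_mx b (kron_vec p b)).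
Proof.
have IxOab : IxO *m col_mx a b = a by rewrite mul_row_col mul1mx mul0mx addr0.
have OxIab : OxI *m col_mx a b = b by rewrite mul_row_col mul1mx mul0mx add0r.
rewrite /L12 kron_col_mulmx mul1mx diag_col_kron_ones /M2 mul_row_col.
rewrite !mul_col_mx !mul0mx !tensmx_kron_vec !mul1mx !kron_col_mulmx !mul0mx.
by rewrite !kron_vec0r IxOab OxIab !add_col_mx !add0r !addr0.
Qed.

Lemma lyap_mx_coercive :
  exists2 c, 0 < c & forall p, PP p -> forall a b : 'cV[R]_nx,
    `|col_mx a b| ^+ 2 <= c * mxform (col_mx a b) (lyap_mx P (Acl p)) (col_mx a b).
Proof.
have symW : sym_mx W.
  by rewrite /sym_mx /W tr_block_mx trmxK /P0 tr_block_mx !trmx0 symP.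
have [c c0 S_procedure] := full_block_S_procedure symXi symW lmi.
exists c => // p PPp a b; rewrite -W_form // -M2_lift.
set u := col_mx _ (col_mx a b).
have M1u : M1 *m u = col_mx 1%:M (Delta p) *m (L12 *m col_mx a b).
  by rewrite /M1 mul_col_mx !mul_row_col !mul0mx add0r mul1mx addr0 mul_col_mx mul1mx.
apply: le_trans (S_procedure _ _ u (multiplier PPp) M1u).
by rewrite ler_pXn2r ?nnegrE ?normr_ge0 ?mx_norm_col_mxr.
Qed.

End DataDrivenDesign.

(* Data: N = N_d - 1; xd 0 .. xd N, ud 0 .. ud (N-1), pd 0 .. pd (N-1)
   (0-based indexing of x^d_1 .. x^d_{N_d}, etc.). *)
Theorem theorem3 (R : realType) (nx nu np N : nat)
  (PP : set 'cV[R]_np) (PP_compact : compact PP) (PP_convex : convex_set PP)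
  (A0 : 'M[R]_nx) (Ai : 'I_np -> 'M[R]_nx)
  (B0 : 'M[R]_(nx, nu)) (Bi : 'I_np -> 'M[R]_(nx, nu))
  (xd : nat -> 'cV[R]_nx) (ud : nat -> 'cV[R]_nu) (pd : nat -> 'cV[R]_np)
  (Hdata : forall k, (k < N)%N ->
     PP (pd k) /\
     xd k.+1 = affine A0 Ai (pd k) *m xd k + affine B0 Bi (pd k) *m ud k)
  (P : 'M[R]_nx)
  (FF : 'M[R]_(N, nx + np * nx + np * (np * nx)))
  (FQ : 'M[R]_(N + np * N, nx + np * nx))
  (Y0 : 'M[R]_(nu, nx)) (Ybar : 'M[R]_(nu, np * nx))
  (Xi : 'M[R]_(np * (nx + nx) + np * (nx + nx))) :
  let U : 'M[R]_(nu, N) := \matrix_(i, j) ud j i 0 in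
  let Up : 'M[R]_(np * nu, N) := \matrix_(i, j) kron_vec (pd j) (ud j) i 0 in
  let X : 'M[R]_(nx, N) := \matrix_(i, j) xd j i 0 in
  let Xp : 'M[R]_(np * nx, N) := \matrix_(i, j) kron_vec (pd j) (xd j) i 0 in
  let Xplus : 'M[R]_(nx, N) := \matrix_(i, j) xd j.+1 i 0 in
  let Dp := col_mx (col_mx X Xp) (col_mx U Up) in
  let P0 : 'M[R]_(nx + np * nx) := block_mx P 0 0 0 in
  let XXplus : 'M[R]_(nx + np * nx, N + np * N) :=
    block_mx Xplus 0 0 ((1%:M : 'M[R]_np) *t Xplus) in
  let W := block_mx P0 (XXplus *m FQ) (XXplus *m FQ)^T P0 in
  let Delta (p : 'cV[R]_np) : 'M[R]_(np * (nx + nx)) :=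
    diag_col p *t (1%:M : 'M[R]_(nx + nx)) in
  let L11 : 'M[R]_(np * (nx + nx)) := 0 in
  let L12 : 'M[R]_(np * (nx + nx), nx + nx) := kron_col (ones R np) 1%:M in
  let IxO : 'M[R]_(nx, nx + nx) := row_mx 1%:M 0 in
  let OxI : 'M[R]_(nx, nx + nx) := row_mx 0 1%:M in
  let L21 : 'M[R]_((nx + np * nx) + (nx + np * nx), np * (nx + nx)) :=
    col_mx (col_mx 0 ((1%:M : 'M[R]_np) *t IxO))
           (col_mx 0 ((1%:M : 'M[R]_np) *t OxI)) in
  let L22 : 'M[R]_((nx + np * nx) + (nx + np * nx), nx + nx) :=
    col_mx (col_mx IxO (kron_col (ones R np) (0 : 'M[R]_(nx, nx + nx))))
           (col_mx OxI (kron_col (ones R np) (0 : 'M[R]_(nx, nx + nx)))) in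
  let M1 := col_mx (row_mx L11 L12) (row_mx 1%:M 0) in
  let M2 := row_mx L21 L22 in
  let K0 := Y0 *m invmx P in
  let Kbar := Ybar *m invmx ((1%:M : 'M[R]_np) *t P) in
  let K (p : 'cV[R]_np) : 'M[R]_(nu, nx) :=
    affine K0 (blk_col Kbar) p in
  row_free Dp ->
  sym_mx P -> posdef P ->
  (forall p, PP p ->
     FF *m col_mx (col_mx 1%:M (kron_col p 1%:M))
                  (kron_col p (kron_col p (1%:M : 'M[R]_nx)))
     = (col_mx 1%:M (kron_col p (1%:M : 'M[R]_N)))^T *m FQ
         *m col_mx 1%:M (kron_col p 1%:M)) ->
  col_mx (col_mx
     (row_mx (row_mx P 0) 0)
     (row_mx (row_mx 0 ((1%:M : 'M[R]_np) *t P)) 0))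
   (col_mx
     (row_mx (row_mx Y0 Ybar) 0)
     (row_mx (row_mx 0 ((1%:M : 'M[R]_np) *t Y0))
             ((1%:M : 'M[R]_np) *t Ybar)))
   = Dp *m FF ->
  sym_mx Xi ->
  negdef (M1^T *m Xi *m M1 - M2^T *m W *m M2) ->
  (forall p, PP p ->
     possemidef ((col_mx 1%:M (Delta p))^T *m Xi *m col_mx 1%:M (Delta p))) ->
  lpv_stable PP
    (fun p => affine A0 Ai p + affine B0 Bi p *m K p).
Proof.
move=> U Up X Xp Xplus Dp P0 XXplus W Delta L11 L12 IxO OxI L21 L22 M1 M2 K0 Kbar K
  _ symP pdP FF_FQ FF_data symXi lmi multiplier.
have state_eq k (kN : (k < N)%N) := (Hdata k kN).2.
have [c c0 lyap_coercive] :=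
  lyap_mx_coercive state_eq symP pdP FF_FQ FF_data symXi lmi multiplier.
have [cP cP0 P_le_norm] := mxform_le_norm P.
pose kap := 1 + cP * c.
have kap1 : 1 <= kap by rewrite lerDl mulr_ge0 // ltW.
have kap0 : 0 < kap := lt_le_trans ltr01 kap1.
apply: (lpv_stable_of_lyapunov (rho := 1 - kap^-1) (sym_invmx symP)
          (posdef_invmx symP pdP)).
  by rewrite subr_ge0 invf_le1 // kap1 /= ltrBlDr ltrDl invr_gt0.
move=> p PPp; apply: lyap_mx_contraction => //; first exact: posdef_unitmx.
move=> a b; have := lyap_coercive p PPp a b.
set Phi := mxform _ _ _ => ab_le_Phi.
have Phi0 : 0 <= Phi by rewrite -(pmulr_rge0 _ c0) (le_trans _ ab_le_Phi) ?sqr_ge0.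
have : `|b| ^+ 2 <= `|col_mx a b| ^+ 2.
  by rewrite ler_pXn2r ?nnegrE ?normr_ge0 ?mx_norm_col_mxr.
move/le_trans/(_ ab_le_Phi)/(ler_wpM2l cP0) => cP_b.
apply: le_trans (P_le_norm b) _; rewrite /kap mulrDl mul1r; lra.
Qed.
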